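(* Suppose $D_{KL}(\hat{\mathsf p}_k\,\|\,\hat\pi_k)\le\epsilon_k<\infty$ for each $k$. Then the linearized game with payoff $\tilde L(\lambda,g)=\sum_{k=1}^p\lambda_kD_{KL}(\hat{\mathsf p}_k\,\|\,\pi_g)$ on $\Delta\times\mathcal G_1$ admits a saddle point $(\lambda^*,g^* )$, i.e. $\tilde L(\lambda,g^* )\le\tilde L(\lambda^*,g^* )\le\tilde L(\lambda^*,g)$ for all $\lambda\in\Delta$, $g\in\mathcal G_1$. Moreover, for any such saddle point and every $\lambda\in\Delta$, $$D_{KL}(\hat{\mathsf p}_\lambda\,\|\,\pi_{g^*})\le\log\Big(\sum_{k=1}^pe^{\epsilon_k}\Big)-H^{\lambda^*}_\sigma(K|X)-D^{\lambda}_{JSD}(\hat{\mathsf p}_1,\dots,\hat{\mathsf p}_p),$$ where $\sigma_k=e^{\epsilon_k}/\sum_{j=1}^pe^{\epsilon_j}$, $\pi_\sigma=\sum_{k=1}^p\sigma_k\hat\pi_k$, and $$H^{\lambda^*}_\sigma(K|X)=\sum_{k=1}^p\lambda^*_k\,\mathbb E_{x\sim\hat{\mathsf p}_k}\Big[-\log\frac{\sigma_k\hat\pi_k(x)}{\pi_\sigma(x)}\Big].$$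
   Context: Fix an integer $p\ge 1$, $[1,p]=\{1,\dots,p\}$, $\Delta=\{\lambda\in\mathbb R^p:\lambda_k\ge 0,\ \sum_k\lambda_k=1\}$. Let $\hat{\mathsf p}_1,\dots,\hat{\mathsf p}_p$ be probability distributions with finite supports, $\mathcal X_0=\bigcup_k\mathrm{supp}(\hat{\mathsf p}_k)$, and $\hat\pi_1,\dots,\hat\pi_p$ probability distributions on $\mathcal X_0$. A gate is $g:\mathcal X_0\times[1,p]\to[0,1]$ with $\sum_kg(x,k)=1$ for each $x$; $\pi_g(x)=\sum_kg(x,k)\hat\pi_k(x)$, $Z_g=\sum_{x\in\mathcal X_0}\pi_g(x)$, $\mathcal G_1=\{g:Z_g=1\}$. For $\lambda\in\Delta$, $\hat{\mathsf p}_\lambda=\sum_k\lambda_k\hat{\mathsf p}_k$. $D_{KL}(P\|Q)=\sum_xP(x)\log\frac{P(x)}{Q(x)}\in[0,\infty]$ with conventions $0\log\frac0q=0$, $a\log\frac a0=+\infty$ for $a>0$. The Jensen–Shannon divergence is $D^\lambda_{JSD}(\hat{\mathsf p}_1,\dots,\hat{\mathsf p}_p)=\sum_{k=1}^p\lambda_kD_{KL}(\hat{\mathsf p}_k\,\|\,\hat{\mathsf p}_\lambda)$. *)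

From HB Require Import structures.
From mathcomp Require Import all_boot all_order all_algebra.
From mathcomp Require Import all_classical all_reals all_analysis.
Set Implicit Arguments. Unset Strict Implicit. Unset Printing Implicit Defensive.
Import Order.TTheory GRing.Theory Num.Theory.
Local Open Scope ring_scope.

Section Defs.
Context {R : realType} {T : finType} {p : nat}.

Definition is_distr (P : T -> R) : Prop :=
  (forall x, 0 <= P x) /\ \sum_x P x = 1.

(* Kullback-Leibler divergence with values in [0, +oo]:
   0 log (0/q) = 0, a log (a/0) = +oo for a > 0 *)
Definition KL (P Q : T -> R) : \bar R :=
  if [exists x, (0 < P x) && (Q x == 0)] then +oo%E
  else (\sum_(x | 0 < P x) P x * ln (P x / Q x))%:E.

Definition simplex (l : 'I_p -> R) : Prop :=
  (forall k, 0 <= l k) /\ \sum_k l k = 1.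

Definition X0 (ph : 'I_p -> T -> R) : {set T} :=
  [set x | [exists k, 0 < ph k x]].

Definition distr_on (A : {set T}) (P : T -> R) : Prop :=
  (forall x, 0 <= P x) /\ (forall x, x \notin A -> P x = 0) /\
  \sum_(x in A) P x = 1.

(* a gate g : X_0 x [1,p] -> [0,1] with sum_k g(x,k) = 1 (values outside
   X_0 are irrelevant) *)
Definition is_gate (ph : 'I_p -> T -> R) (g : T -> 'I_p -> R) : Prop :=
  forall x, x \in X0 ph ->
    (forall k, 0 <= g x k <= 1) /\ \sum_k g x k = 1.

Definition pi_g (pih : 'I_p -> T -> R) (g : T -> 'I_p -> R) (x : T) : R :=
  \sum_k g x k * pih k x.

Definition Z_g (ph pih : 'I_p -> T -> R) (g : T -> 'I_p -> R) : R :=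
  \sum_(x in X0 ph) pi_g pih g x.

Definition G1 (ph pih : 'I_p -> T -> R) (g : T -> 'I_p -> R) : Prop :=
  is_gate ph g /\ Z_g ph pih g = 1.

Definition mix (l : 'I_p -> R) (ph : 'I_p -> T -> R) (x : T) : R :=
  \sum_k l k * ph k x.

Definition Ltilde (ph pih : 'I_p -> T -> R) (l : 'I_p -> R)
  (g : T -> 'I_p -> R) : \bar R :=
  (\sum_(k < p) (l k)%:E * KL (ph k) (pi_g pih g))%E.

Definition saddle (ph pih : 'I_p -> T -> R) (lstar : 'I_p -> R)
  (gstar : T -> 'I_p -> R) : Prop :=
  [/\ simplex lstar, G1 ph pih gstar,
      (forall l, simplex l -> (Ltilde ph pih l gstar <= Ltilde ph pih lstar gstar)%E)
    & (forall g, G1 ph pih g -> (Ltilde ph pih lstar gstar <= Ltilde ph pih lstar g)%E)].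

Definition JSD (l : 'I_p -> R) (ph : 'I_p -> T -> R) : \bar R :=
  (\sum_(k < p) (l k)%:E * KL (ph k) (mix l ph))%E.

Definition sigma (eps : 'I_p -> R) (k : 'I_p) : R :=
  expR (eps k) / \sum_j expR (eps j).

(* H^{lambda}_sigma(K|X) = sum_k lambda_k E_{x~hat p_k}[-log(sigma_k pih_k(x)/pi_sigma(x))],
   where pi_sigma = mix sigma pih; -log 0 = +oo *)
Definition Hcond (l eps : 'I_p -> R) (ph pih : 'I_p -> T -> R) : \bar R :=
  (\sum_(k < p) (l k)%:E *
     \sum_(x | (0 < ph k x)%R) (ph k x)%:E *
        (if (pih k x == 0)%R then +oo
         else (- ln (sigma eps k * pih k x / mix (sigma eps) pih x))%R%:E))%E.

End Defs.

From HB Require Import structures.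
From mathcomp Require Import all_boot all_order all_algebra.
From mathcomp Require Import all_classical all_reals all_analysis.
From mathcomp Require Import ring lra.
Import Order.TTheory GRing.Theory Num.Theory.
Import numFieldTopology.Exports.
Set Implicit Arguments. Unset Strict Implicit. Unset Printing Implicit Defensive.
Local Open Scope classical_set_scope.
Local Open Scope ring_scope.

(* Saddle point: the losses [g |-> D_KL(p_k || pi_g)] are convex in the gate.
   Gates whose [pi_g] is tiny somewhere are dominated, since one loss then
   exceeds the maximal loss of the constant gate [sigma]; on the remaining
   compact set of gates [max_k D_KL(p_k || pi_g)] attains its minimum [v] at
   some [gstar].  A Kneser-Fan lemma for convexlike families turns "some loss
   is at least [v] at every gate" into a weight [lstar] whose mixture of losses
   is at least [v] everywhere, which makes [(lstar, gstar)] a saddle point.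
   Bound: [L~(l, gstar) <= L~(lstar, gstar) <= L~(lstar, sigma)], the last
   term is at most [log sum_k e^eps_k - H] by a direct computation, and
   [sum_k l_k D_KL(p_k || Q) = D_KL(p_l || Q) + JSD^l]. *)

Section Minimax.
Variables (R : realType) (V : Type).

Definition convexlike (C : set V) (I : Type) (F : I -> V -> R) : Prop :=
  forall a b, C a -> C b -> forall s, 0 <= s <= 1 ->
    exists2 z, C z & forall i, F i z <= (1 - s) * F i a + s * F i b.

Section Pair.
Variables (C : set V) (f g : V -> R) (v : R).
Hypothesis fg_convexlike : convexlike C (fun b : bool => if b then f else g).
Hypothesis fg_cover : forall c, C c -> v <= f c \/ v <= g c.

Lemma convexlike_cross c d : C c -> C d -> f c < v -> g d < v ->
  (v - f c) * (v - g d) <= (g c - v) * (f d - v).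
Proof.
move=> Cc Cd fc gd.
have gc : v <= g c by case: (fg_cover Cc) => //; lra.
have fd : v <= f d by case: (fg_cover Cd) => //; lra.
rewrite leNgt; apply/negP => cross.
set a := v - f c; set b := g c - v; set e := f d - v; set h := v - g d.
have D0 : 0 < a + b + e + h by rewrite /a /b /e /h; lra.
(* the weight at which both convex combinations of [f] and [g] fall below [v] *)
set s := (a + b) / (a + b + e + h).
have s01 : 0 <= s <= 1.
  rewrite /s divr_ge0 ?ler_pdivrMr ?ltW //= /a /b /e /h; lra.
have [z Cz Fz] := fg_convexlike Cc Cd s01.
have /= fz := Fz true; have /= gz := Fz false.
have ef : (1 - s) * f c + s * f d - v = (b * e - a * h) / (a + b + e + h).
  by rewrite /s /a /b /e /h; field; rewrite -/a -/b -/e -/h; lra.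
have eg : (1 - s) * g c + s * g d - v = (e * b - a * h) / (a + b + e + h).
  by rewrite /s /a /b /e /h; field; rewrite -/a -/b -/e -/h; lra.
have nf : (b * e - a * h) / (a + b + e + h) < 0.
  by rewrite pmulr_llt0 ?invr_gt0 // /a /b /e /h; lra.
have ng : (e * b - a * h) / (a + b + e + h) < 0.
  by rewrite pmulr_llt0 ?invr_gt0 // /a /b /e /h; nra.
by case: (fg_cover Cz); lra.
Qed.

Lemma convexlike_minimax2 :
  exists2 t, 0 <= t <= 1 & forall c, C c -> v <= t * f c + (1 - t) * g c.
Proof.
(* a point with [g c < v] forces [t >= (v - g c) / (f c - g c)]; the smallest
   weight meeting all these constraints also meets those from [f c < v] *)
pose S := [set r : R | r = 0 \/ exists2 c, C c /\ g c < v & r = (v - g c) / (f c - g c)].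
have S0 : S 0 by left.
have S_le1 : ubound S 1.
  move=> r [->|[c [Cc gc] ->]]; first lra.
  have fc : v <= f c by case: (fg_cover Cc) => //; lra.
  by rewrite ler_pdivrMr; lra.
have S_sup : has_sup S by split; [exists 0 | exists 1].
set t := sup S.
have t0 : 0 <= t by apply: sup_upper_bound.
have t1 : t <= 1 by apply: ge_sup => //; exists 0.
exists t; first by rewrite t0 t1.
move=> c Cc.
have [fc|fc] := ltP (f c) v.
  have gc : v <= g c by case: (fg_cover Cc) => //; lra.
  have S_ub : ubound S ((g c - v) / (g c - f c)).
    move=> r [->|[d [Cd gd] ->]]; first by apply: divr_ge0; lra.
    have fd : v <= f d by case: (fg_cover Cd) => //; lra.
    have := convexlike_cross Cc Cd fc gd.
    rewrite ler_pdivrMr; last lra.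
    rewrite mulrAC ler_pdivlMr; [nra | lra].
  have := ge_sup (ex_intro _ 0 S0) S_ub.
  rewrite -/t ler_pdivlMr; [nra | lra].
have [gc|gc] := ltP (g c) v.
  have Sc : S ((v - g c) / (f c - g c)) by right; exists c.
  have := sup_upper_bound S_sup Sc.
  rewrite -/t ler_pdivrMr; [nra | lra].
have : 0 <= t * (f c - v) by apply: mulr_ge0; lra.
have : 0 <= (1 - t) * (g c - v) by apply: mulr_ge0; lra.
nra.
Qed.

End Pair.

Lemma convexlike_minimax n (C : set V) (F : 'I_n -> V -> R) (v : R) :
  (0 < n)%N -> convexlike C F -> (forall c, C c -> exists k, v <= F k c) ->
  exists2 l, simplex l & forall c, C c -> v <= \sum_k l k * F k c.
Proof.
case: n F => // n F _; elim: n C F v => [|n IH] C F v F_cvx F_cover.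
  exists (fun=> 1); first by split => [//|]; rewrite big_ord1.
  move=> c Cc; rewrite big_ord1 mul1r.
  by have [k] := F_cover c Cc; rewrite (ord1 k).
pose F' (k : 'I_n.+1) := F (widen_ord (leqnSn _) k).
have [mu [mu0 mu1] muC] : exists2 mu, simplex mu &
    forall c, C c /\ F ord_max c < v -> v <= \sum_k mu k * F' k c.
  apply: IH => [a b [Ca Fa] [Cb Fb] s s01 | c [Cc Fc]].
    have [z Cz Fz] := F_cvx a b Ca Cb s s01.
    exists z => [|k]; last exact: Fz.
    split => //; apply: le_lt_trans (Fz ord_max) _.
    case/andP: s01 => s0 s1; have [->|s_neq0] := eqVneq s 0; first lra.
    have : 0 < s by rewrite lt_def s_neq0 s0.
    nra.
  have [k vF] := F_cover c Cc.
  have k_max : (k : nat) != n.+1.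
    by apply: contraTneq Fc => /(@ord_inj _ k ord_max) <-; rewrite -leNgt.
  have k_small : (k < n.+1)%N by rewrite ltn_neqAle k_max -ltnS ltn_ord.
  by exists (Ordinal k_small); rewrite /F' (_ : widen_ord _ _ = k) //; apply: ord_inj.
pose f c := \sum_k mu k * F' k c.
have f_cvx : convexlike C (fun b : bool => if b then f else F ord_max).
  move=> a b Ca Cb s s01; have [z Cz Fz] := F_cvx a b Ca Cb s s01.
  exists z => // [[]] /=; last exact: Fz.
  rewrite /f !mulr_sumr -big_split /=; apply: ler_sum => k _.
  by rewrite mulrCA (mulrCA s) -mulrDr; apply: ler_wpM2l => //; apply: Fz.
have f_cover c : C c -> v <= f c \/ v <= F ord_max c.
  move=> Cc; have [Fc|Fc] := ltP (F ord_max c) v; last by right.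
  by left; apply: muC.
have [t t01 tC] := convexlike_minimax2 f_cvx f_cover.
exists (fun k : 'I_n.+2 => if (k : nat) == n.+1 then 1 - t else t * mu (inord k)).
  split=> [k|]; first by case: eqP => _; [lra | apply: mulr_ge0 => //; lra].
  rewrite big_ord_recr /= eqxx.
  under eq_bigr => k _ do rewrite /= ltn_eqF // inord_val.
  by rewrite -mulr_sumr mu1; lra.
move=> c Cc; rewrite big_ord_recr /= eqxx.
under eq_bigr => k _ do rewrite /= ltn_eqF // inord_val -mulrA.
by rewrite -mulr_sumr; apply: tC.
Qed.

End Minimax.

Section Topology.
Variable T : topologicalType.

Lemma continuous_big_at (U : topologicalType) (I : Type) (op : U -> U -> U)
    (f0 : T -> U) (r : seq I) (P : pred I) (F : I -> T -> U) (x : T) :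
  continuous (fun y : U * U => op y.1 y.2) -> {for x, continuous f0} ->
  (forall i, P i -> {for x, continuous (F i)}) ->
  {for x, continuous (fun y => \big[op/f0 y]_(i <- r | P i) F i y)}.
Proof.
move=> op_cont f0_cont F_cont; elim: r => [|i r IH].
  by under [X in {for _, continuous X}]funext => y do rewrite big_nil.
under [X in {for _, continuous X}]funext => y do rewrite big_cons.
case: (boolP (P i)) => [Pi|_] //.
exact: (continuous2_cvg _ (op_cont (F i x, _)) (F_cont i Pi) IH).
Qed.

Lemma closed_forall_preimage (I : Type) (P : set I) (V : topologicalType)
    (f : I -> T -> V) (D : I -> set V) :
  (forall i, P i -> continuous (f i)) -> (forall i, P i -> closed (D i)) ->
  closed [set x | forall i, P i -> D i (f i x)].
Proof.
move=> f_cont D_closed.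
have -> : [set x | forall i, P i -> D i (f i x)] = \bigcap_(i in P) (f i @^-1` D i).
  by apply/seteqP; split=> x.
apply: closed_bigI => i Pi.
by apply: (continuous_closedP (f i)).1; [exact: f_cont | exact: D_closed].
Qed.

End Topology.

Section Cube.
Variables (R : realType) (U : eqType).
Local Notation W := (prod_topology (fun _ : U => R)).

Definition cube : set W := [set G | forall u, G u \in `[0, 1]].

Lemma cube_argmin (K : set W) (Phi : W -> R) :
  (cube `&` K) !=set0 -> closed K ->
  (forall G, (cube `&` K) G -> {for G, continuous Phi}) ->
  exists2 G0, (cube `&` K) G0 & forall G, (cube `&` K) G -> Phi G0 <= Phi G.
Proof.
move=> K0 K_closed Phi_cont.
have cube_compact : compact cube.
  exact: (tychonoff (fun _ : U => @segment_compact R 0 1)).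
have K_compact := compact_closedI cube_compact K_closed.
have Phi_contK : {within cube `&` K, continuous Phi}.
  by apply: continuous_in_subspaceT => G /set_mem; apply: Phi_cont.
have [G0 G0K G0min] := compact_EVT_min K0 K_compact Phi_contK.
by exists G0 => [|G KG]; [exact: set_mem | apply: G0min; rewrite inE].
Qed.

End Cube.
Arguments cube {R U}.

Section RealFacts.
Variable R : realType.

Lemma le_of_conv_le (v a b : R) :
  (forall t, 0 < t <= 1 -> v <= (1 - t) * a + t * b) -> v <= a.
Proof.
move=> H; rewrite leNgt; apply/negP => av.
set M := Num.max 0 (b - a) + 1.
have M1 : 1 <= M by rewrite /M lerDr le_max lexx.
have baM : b - a <= M - 1 by rewrite /M addrK le_max lexx orbT.
(* at this weight the combination still lies strictly below [v] *)
set t := (v - a) / (v - a + M).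
have t0 : 0 < t by rewrite /t divr_gt0 //; lra.
have t1 : t <= 1 by rewrite /t ler_pdivrMr; lra.
have tM : t * (v - a + M) = v - a by rewrite /t mulrAC -mulrA divff ?mulr1 //; lra.
have := H t (introT andP (conj t0 t1)).
have : t * (b - a) <= t * (M - 1) by apply: ler_wpM2l => //; apply: ltW.
nra.
Qed.

Lemma pos_lower_bound (I : finType) (P : pred I) (f : I -> R) :
  (forall i, P i -> 0 < f i) -> exists2 m, 0 < m & forall i, P i -> m <= f i.
Proof.
move=> f_gt0; set S := \sum_(i | P i) (f i)^-1.
have S_ge0 : 0 <= S by apply: sumr_ge0 => i Pi; rewrite invr_ge0 ltW ?f_gt0.
exists (1 + S)^-1 => [|i Pi]; first by rewrite invr_gt0; lra.
have fi := f_gt0 i Pi.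
rewrite -[f i]invrK lef_pV2 ?posrE ?invr_gt0 //; last lra.
rewrite /S (bigD1 i) //=.
have : 0 <= \sum_(j | P j && (j != i)) (f j)^-1.
  by apply: sumr_ge0 => j /andP[Pj _]; rewrite invr_ge0 ltW ?f_gt0.
lra.
Qed.

End RealFacts.

Section KullbackLeibler.
Variables (R : realType) (T : finType).

Definition kl (P Q : T -> R) : R := \sum_(x | 0 < P x) P x * ln (P x / Q x).

Lemma KL_kl (P Q : T -> R) : (forall x, 0 < P x -> Q x != 0) -> KL P Q = (kl P Q)%:E.
Proof.
move=> Q_neq0; rewrite /KL; case: existsP => // -[x /andP[Px /eqP Qx]].
by have := Q_neq0 x Px; rewrite Qx eqxx.
Qed.

Lemma KL_infty (P Q : T -> R) x : 0 < P x -> Q x = 0 -> KL P Q = +oo%E.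
Proof.
by move=> Px Qx; rewrite /KL; case: existsP => // -[]; exists x; rewrite Px Qx eqxx.
Qed.

Lemma kl_sumT (P Q : T -> R) : (forall x, 0 <= P x) ->
  kl P Q = \sum_x P x * ln (P x / Q x).
Proof.
move=> P_ge0; rewrite /kl big_mkcond /=; apply: eq_bigr => x _.
case: ifPn => //; rewrite lt_def P_ge0 andbT negbK => /eqP ->.
by rewrite mul0r.
Qed.

Lemma kl_conv (P Q1 Q2 : T -> R) s :
  (forall x, 0 < P x -> 0 < Q1 x /\ 0 < Q2 x) -> 0 <= s <= 1 ->
  kl P (fun x => (1 - s) * Q1 x + s * Q2 x) <= (1 - s) * kl P Q1 + s * kl P Q2.
Proof.
move=> Q_gt0 /andP[s0 s1]; rewrite /kl !mulr_sumr -big_split /=.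
apply: ler_sum => x Px; have [q1 q2] := Q_gt0 x Px.
have := @concave_ln R (Itv01 s0 s1) _ _ q2 q1.
have := @convR_gt0 R _ _ (Itv01 s0 s1) q2 q1.
rewrite !convRE /= /unstable.onem [_ + _ * Q1 x]addrC => Qs ln_conc.
rewrite !ln_div ?posrE //; have := ler_wpM2l (ltW Px) ln_conc; lra.
Qed.

Lemma mulEFin_kl_le_KL (l : R) (P Q : T -> R) : 0 <= l ->
  ((l * kl P Q)%:E <= l%:E * KL P Q)%E.
Proof.
move=> l0; rewrite /KL; case: ifP => _; last by rewrite EFinM.
have [->|l_neq0] := eqVneq l 0; first by rewrite mul0r mul0e.
by rewrite mulry gtr0_sg ?lt_def ?l_neq0 // mul1e leey.
Qed.

End KullbackLeibler.

Section Game.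
Variables (R : realType) (T : finType) (p : nat).
Variables (ph pih : 'I_p -> T -> R) (eps : 'I_p -> R).
Hypothesis p_gt0 : (0 < p)%N.
Hypothesis ph_distr : forall k, is_distr (ph k).
Hypothesis pih_distr : forall k, distr_on (X0 ph) (pih k).
Hypothesis KL_le_eps : forall k, (KL (ph k) (pih k) <= (eps k)%:E)%E.

Lemma ph_ge0 k x : 0 <= ph k x.
Proof. by case: (ph_distr k). Qed.

Lemma pih_ge0 k x : 0 <= pih k x.
Proof. by case: (pih_distr k). Qed.

Lemma pih_out k x : x \notin X0 ph -> pih k x = 0.
Proof. by case: (pih_distr k) => _ [+ _]; apply. Qed.

Lemma mem_X0 k x : 0 < ph k x -> x \in X0 ph.
Proof. by move=> ph_gt0; rewrite inE; apply/existsP; exists k. Qed.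

Lemma pih_gt0 k x : 0 < ph k x -> 0 < pih k x.
Proof.
move=> ph_gt0; rewrite lt_def pih_ge0 andbT; apply/eqP => pih0.
by have := KL_le_eps k; rewrite (KL_infty ph_gt0 pih0).
Qed.

Lemma kl_le_eps k : kl (ph k) (pih k) <= eps k.
Proof.
have := KL_le_eps k; rewrite KL_kl ?lee_fin // => x /pih_gt0.
exact: lt0r_neq0.
Qed.

Lemma sum_ph_supp k : \sum_(x | 0 < ph k x) ph k x = 1.
Proof.
case: (ph_distr k) => ph0 <-; rewrite big_mkcond /=; apply: eq_bigr => x _.
by case: ifPn => //; rewrite lt_def ph0 andbT negbK => /eqP ->.
Qed.

Definition loss k g := kl (ph k) (pi_g pih g).

Definition G1pos g := G1 ph pih g /\ forall x, x \in X0 ph -> 0 < pi_g pih g x.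

Lemma pi_g_ge0 g x : is_gate ph g -> x \in X0 ph -> 0 <= pi_g pih g x.
Proof.
move=> g_gate x_X0; apply: sumr_ge0 => k _; rewrite mulr_ge0 ?pih_ge0 //.
by case: (g_gate x x_X0) => /(_ k) /andP[].
Qed.

Lemma pi_g_le1 g x : G1 ph pih g -> x \in X0 ph -> pi_g pih g x <= 1.
Proof.
move=> [g_gate <-] x_X0; rewrite /Z_g (bigD1 x) //= lerDl.
by apply: sumr_ge0 => y /andP[y_X0 _]; apply: pi_g_ge0.
Qed.

Lemma Ltilde_G1pos l g : G1pos g -> Ltilde ph pih l g = (\sum_k l k * loss k g)%:E.
Proof.
move=> [_ g_pos]; rewrite /Ltilde -sumEFin; apply: eq_bigr => k _.
rewrite KL_kl ?EFinM // => x /mem_X0/g_pos; exact: lt0r_neq0.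
Qed.

Lemma Ltilde_infty l g k : (forall k, 0 <= l k) -> 0 < l k ->
  KL (ph k) (pi_g pih g) = +oo%E -> Ltilde ph pih l g = +oo%E.
Proof.
move=> l_ge0 lk KLk; apply/eqP; rewrite -leye_eq /Ltilde (bigD1 k) //= KLk.
rewrite mulry gtr0_sg // mul1e.
have : (\sum_(j | j != k) (l j * loss j g)%:E <=
    \sum_(j | j != k) (l j)%:E * KL (ph j) (pi_g pih g))%E.
  by apply: lee_sum => j _; apply: mulEFin_kl_le_KL.
rewrite sumEFin => /(leeD2l +oo%E); apply: le_trans.
by rewrite addye.
Qed.

Lemma Ltilde_kl l g : (forall k, 0 <= l k) ->
  (forall k, 0 < l k -> forall x, 0 < ph k x -> pi_g pih g x != 0) ->
  Ltilde ph pih l g = (\sum_k l k * loss k g)%:E.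
Proof.
move=> l_ge0 g_pos; rewrite /Ltilde -sumEFin; apply: eq_bigr => k _.
have [->|lk] := eqVneq (l k) 0; first by rewrite mul0r mul0e.
by rewrite (KL_kl (g_pos k _)) ?EFinM // lt_def lk l_ge0.
Qed.

Lemma Ltilde_supp l g : (forall k, 0 <= l k) ->
  (Ltilde ph pih l g < +oo)%E ->
  forall k, 0 < l k -> forall x, 0 < ph k x -> pi_g pih g x != 0.
Proof.
move=> l_ge0 L_fin k lk x ph_gt0; apply/eqP => pi0.
by move: L_fin; rewrite (Ltilde_infty l_ge0 lk (KL_infty ph_gt0 pi0)).
Qed.

Definition gate_conv (s : R) (a b : T -> 'I_p -> R) : T -> 'I_p -> R :=
  fun x k => (1 - s) * a x k + s * b x k.

Lemma pi_g_conv s a b x :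
  pi_g pih (gate_conv s a b) x = (1 - s) * pi_g pih a x + s * pi_g pih b x.
Proof.
rewrite /pi_g !mulr_sumr -big_split; apply: eq_bigr => k _ /=.
by rewrite mulrDl !mulrA.
Qed.

Lemma G1_conv s a b : 0 <= s <= 1 -> G1 ph pih a -> G1 ph pih b ->
  G1 ph pih (gate_conv s a b).
Proof.
move=> /andP[s0 s1] [a_gate Za] [b_gate Zb]; split.
  move=> x x_X0; have [a01 a1] := a_gate x x_X0; have [b01 b1] := b_gate x x_X0.
  split; last by rewrite /gate_conv big_split /= -!mulr_sumr a1 b1; lra.
  move=> k; have /andP[? ?] := a01 k; have /andP[? ?] := b01 k.
  by rewrite /gate_conv; apply/andP; split; nra.
rewrite /Z_g; under eq_bigr => x _ do rewrite pi_g_conv.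
by rewrite big_split /= -!mulr_sumr -!/(Z_g _ _ _) Za Zb; lra.
Qed.

Lemma G1pos_conv s a b : 0 <= s <= 1 -> G1pos a -> G1pos b -> G1pos (gate_conv s a b).
Proof.
move=> s01 [a_G1 a_pos] [b_G1 b_pos]; split; first exact: G1_conv.
move=> x x_X0; rewrite pi_g_conv; have := a_pos x x_X0; have := b_pos x x_X0.
case/andP: s01 => s0 s1 pb pa; have [->|s_neq0] := eqVneq s 0; first lra.
have : 0 < s by rewrite lt_def s_neq0 s0.
nra.
Qed.

Lemma G1pos_convr s a b : 0 < s <= 1 -> G1 ph pih a -> G1pos b ->
  G1pos (gate_conv s a b).
Proof.
move=> /andP[s0 s1] a_G1 [b_G1 b_pos].
split; first by apply: G1_conv => //; rewrite ltW.
move=> x x_X0; rewrite pi_g_conv.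
have : 0 <= pi_g pih a x by apply: pi_g_ge0 => //; case: a_G1.
have := b_pos x x_X0; nra.
Qed.

Lemma loss_conv k s a b : 0 <= s <= 1 ->
  (forall x, 0 < ph k x -> 0 < pi_g pih a x /\ 0 < pi_g pih b x) ->
  loss k (gate_conv s a b) <= (1 - s) * loss k a + s * loss k b.
Proof.
move=> s01 ab_pos; rewrite /loss.
have -> : pi_g pih (gate_conv s a b) =
    (fun x => (1 - s) * pi_g pih a x + s * pi_g pih b x).
  by apply: funext => x; rewrite pi_g_conv.
exact: kl_conv.
Qed.

Lemma loss_conv_G1pos k s a b : 0 <= s <= 1 -> G1pos a -> G1pos b ->
  loss k (gate_conv s a b) <= (1 - s) * loss k a + s * loss k b.
Proof.
move=> s01 [_ a_pos] [_ b_pos]; apply: loss_conv => // x /mem_X0 x_X0.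
by split; [apply: a_pos | apply: b_pos].
Qed.

Definition gate_sigma : T -> 'I_p -> R := fun _ k => sigma eps k.

Lemma sum_expR_gt0 : 0 < \sum_j expR (eps j).
Proof.
rewrite (bigD1 (Ordinal p_gt0)) //= ltr_pwDl ?expR_gt0 //.
by apply: sumr_ge0 => j _; rewrite ltW ?expR_gt0.
Qed.

Lemma sigma_gt0 k : 0 < sigma eps k.
Proof. by rewrite divr_gt0 ?expR_gt0 ?sum_expR_gt0. Qed.

Lemma sum_sigma : \sum_k sigma eps k = 1.
Proof. by rewrite -mulr_suml divff // lt0r_neq0 // sum_expR_gt0. Qed.

Lemma sigma_le1 k : sigma eps k <= 1.
Proof.
rewrite -sum_sigma (bigD1 k) //= lerDl.
by apply: sumr_ge0 => j _; rewrite ltW ?sigma_gt0.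
Qed.

Lemma ln_sigma k : ln (sigma eps k) = eps k - ln (\sum_j expR (eps j)).
Proof. by rewrite ln_div ?posrE ?expR_gt0 ?sum_expR_gt0 // expRK. Qed.

Lemma G1pos_gate_sigma : G1pos gate_sigma.
Proof.
split; first split.
- move=> x _; split; last exact: sum_sigma.
  by move=> k; rewrite ltW ?sigma_gt0 ?sigma_le1.
- rewrite /Z_g /pi_g /gate_sigma exchange_big /= -[RHS]sum_sigma.
  apply: eq_bigr => k _; rewrite -mulr_sumr.
  by case: (pih_distr k) => _ [_ ->]; rewrite mulr1.
- move=> x; rewrite inE => /existsP[k ph_gt0].
  rewrite /pi_g (bigD1 k) //= ltr_pwDl //.
    exact: mulr_gt0 (sigma_gt0 k) (pih_gt0 ph_gt0).
  by apply: sumr_ge0 => j _; rewrite mulr_ge0 ?pih_ge0 // ltW ?sigma_gt0.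
Qed.

Definition cond_ent (l : 'I_p -> R) : R :=
  \sum_k l k * \sum_(x | 0 < ph k x)
    ph k x * - ln (sigma eps k * pih k x / mix (sigma eps) pih x).

Lemma HcondE l : Hcond l eps ph pih = (cond_ent l)%:E.
Proof.
rewrite /Hcond -sumEFin; apply: eq_bigr => k _.
rewrite EFinM -sumEFin; congr (_ * _)%E; apply: eq_bigr => x ph_gt0.
by rewrite (negbTE (lt0r_neq0 (pih_gt0 ph_gt0))) EFinM.
Qed.

Lemma loss_gate_sigma_le k : loss k gate_sigma +
    \sum_(x | 0 < ph k x) ph k x * - ln (sigma eps k * pih k x / mix (sigma eps) pih x)
  <= ln (\sum_j expR (eps j)).
Proof.
suff -> : loss k gate_sigma + \sum_(x | 0 < ph k x) ph k x *
    - ln (sigma eps k * pih k x / mix (sigma eps) pih x) =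
    kl (ph k) (pih k) - ln (sigma eps k) * \sum_(x | 0 < ph k x) ph k x.
  by rewrite sum_ph_supp mulr1 ln_sigma; have := kl_le_eps k; lra.
rewrite /loss /kl -big_split mulr_sumr -sumrB; apply: eq_bigr => x ph_gt0 /=.
have pih_pos := pih_gt0 ph_gt0; have sig_pos := sigma_gt0 k.
have mix_pos : 0 < mix (sigma eps) pih x.
  by case: G1pos_gate_sigma => _; apply; apply: mem_X0 ph_gt0.
change (pi_g pih gate_sigma x) with (mix (sigma eps) pih x).
have sig_pih_pos : sigma eps k * pih k x \is Num.pos by rewrite posrE mulr_gt0.
rewrite (ln_div sig_pih_pos) ?posrE // (lnM (x := sigma eps k)) ?posrE //.
by rewrite [ln (ph k x / _)]ln_div ?posrE // [ln (ph k x / _)]ln_div ?posrE //; ring.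
Qed.

Lemma Ltilde_gate_sigma_le l : simplex l ->
  (Ltilde ph pih l gate_sigma <= (ln (\sum_j expR (eps j)) - cond_ent l)%:E)%E.
Proof.
move=> [l_ge0 l_sum1]; rewrite Ltilde_G1pos ?lee_fin; last exact: G1pos_gate_sigma.
rewrite -[X in X - _]mul1r -l_sum1 mulr_suml -sumrB; apply: ler_sum => k _.
by rewrite -mulrBr ler_wpM2l //; have := loss_gate_sigma_le k; lra.
Qed.

Lemma saddle_Ltilde_le ls gs l : saddle ph pih ls gs -> simplex l ->
  (Ltilde ph pih l gs <= (ln (\sum_j expR (eps j)) - cond_ent ls)%:E)%E.
Proof.
move=> [ls_simplex _ ls_max gs_min] l_simplex.
apply: le_trans (ls_max l l_simplex) _.
apply: le_trans (gs_min _ (proj1 G1pos_gate_sigma)) _.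
exact: Ltilde_gate_sigma_le.
Qed.

Lemma mix_ge l k x : (forall k, 0 <= l k) -> l k * ph k x <= mix l ph x.
Proof.
move=> l_ge0; rewrite /mix (bigD1 k) //= lerDl.
by apply: sumr_ge0 => j _; rewrite mulr_ge0 ?ph_ge0.
Qed.

Lemma mix_gt0 l k x : (forall k, 0 <= l k) -> 0 < l k -> 0 < ph k x -> 0 < mix l ph x.
Proof. by move=> l_ge0 lk ph_gt0; apply: lt_le_trans (mix_ge k x l_ge0); rewrite mulr_gt0. Qed.

Lemma kl_mix_decomp l Q : (forall k, 0 <= l k) ->
  (forall k, 0 < l k -> forall x, 0 < ph k x -> 0 < Q x) ->
  \sum_k l k * kl (ph k) Q = kl (mix l ph) Q + \sum_k l k * kl (ph k) (mix l ph).
Proof.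
move=> l_ge0 Q_pos.
have mix_ge0 x : 0 <= mix l ph x by apply: sumr_ge0 => k _; rewrite mulr_ge0 ?ph_ge0.
rewrite (kl_sumT _ mix_ge0).
have -> : \sum_x mix l ph x * ln (mix l ph x / Q x) =
    \sum_k l k * \sum_x ph k x * ln (mix l ph x / Q x).
  under eq_bigr => x _ do rewrite mulr_suml.
  rewrite exchange_big /=; apply: eq_bigr => k _.
  by rewrite mulr_sumr; apply: eq_bigr => x _; rewrite mulrA.
rewrite -big_split /=; apply: eq_bigr => k _.
rewrite -mulrDr !(kl_sumT _ (ph_ge0 k)).
have [->|lk] := eqVneq (l k) 0; first by rewrite !mul0r.
have lk_pos : 0 < l k by rewrite lt_def lk l_ge0.
congr (_ * _); rewrite -big_split /=; apply: eq_bigr => x _.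
have [ph_gt0|] := ltP 0 (ph k x); last first.
  by rewrite le_eqVlt ltNge ph_ge0 orbF => /eqP ->; rewrite !mul0r addr0.
have Qx := Q_pos k lk_pos x ph_gt0; have mx := mix_gt0 l_ge0 lk_pos ph_gt0.
by rewrite -mulrDr !ln_div ?posrE //; congr (_ * _); ring.
Qed.

Lemma JSD_kl l : (forall k, 0 <= l k) ->
  JSD l ph = (\sum_k l k * kl (ph k) (mix l ph))%:E.
Proof.
move=> l_ge0; rewrite /JSD -sumEFin; apply: eq_bigr => k _.
have [->|lk] := eqVneq (l k) 0; first by rewrite mul0r mul0e.
have lk_pos : 0 < l k by rewrite lt_def lk l_ge0.
by rewrite KL_kl ?EFinM // => x ph_gt0; rewrite lt0r_neq0 ?(mix_gt0 l_ge0 lk_pos).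
Qed.

Lemma KL_mix_kl l Q : (forall k, 0 <= l k) ->
  (forall k, 0 < l k -> forall x, 0 < ph k x -> Q x != 0) ->
  KL (mix l ph) Q = (kl (mix l ph) Q)%:E.
Proof.
move=> l_ge0 Q_neq0; apply: KL_kl => x; apply: contraTneq => Qx.
rewrite -leNgt le_eqVlt; apply/orP; left; apply/eqP.
apply: big1 => k _; have [lk|] := ltP 0 (l k); last first.
  by rewrite le_eqVlt ltNge l_ge0 orbF => /eqP ->; rewrite mul0r.
have [ph_gt0|] := ltP 0 (ph k x).
  by have := Q_neq0 k lk x ph_gt0; rewrite Qx eqxx.
by rewrite le_eqVlt ltNge ph_ge0 orbF => /eqP ->; rewrite mulr0.
Qed.

Lemma saddle_bound ls gs : saddle ph pih ls gs -> forall l, simplex l ->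
  (KL (mix l ph) (pi_g pih gs)
     <= (ln (\sum_k expR (eps k)))%:E - Hcond ls eps ph pih - JSD l ph)%E.
Proof.
move=> saddle_lsgs l l_simplex; have [l_ge0 _] := l_simplex.
have L_le := saddle_Ltilde_le saddle_lsgs l_simplex.
have gs_neq0 := Ltilde_supp l_ge0 (le_lt_trans L_le (ltry _)).
have gs_pos k : 0 < l k -> forall x, 0 < ph k x -> 0 < pi_g pih gs x.
  move=> lk x ph_gt0; rewrite lt_def (gs_neq0 k) //=.
  by case: saddle_lsgs => _ [gs_gate _] _ _; apply: pi_g_ge0 (mem_X0 ph_gt0).
rewrite (Ltilde_kl l_ge0 gs_neq0) lee_fin in L_le.
rewrite JSD_kl // KL_mix_kl // HcondE -!EFinB lee_fin.
by have := kl_mix_decomp l_ge0 gs_pos; rewrite /loss in L_le; lra.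
Qed.

Lemma convexlike_loss : convexlike G1pos loss.
Proof.
move=> a b a_pos b_pos s s01; exists (gate_conv s a b); first exact: G1pos_conv.
by move=> k; apply: loss_conv_G1pos.
Qed.

(* [G1] gates whose [pi_g] vanishes somewhere are reached as limits of the
   [G1pos] gates [gate_conv t g gate_sigma], [t -> 0], along which the losses are convex. *)
Lemma Ltilde_ge_of_G1pos ls v : simplex ls ->
  (forall g, G1pos g -> v <= \sum_k ls k * loss k g) ->
  forall g, G1 ph pih g -> (v%:E <= Ltilde ph pih ls g)%E.
Proof.
move=> [ls_ge0 _] v_le g g_G1.
have [L_fin|L_infty] := ltP (Ltilde ph pih ls g) +oo%E; last first.
  exact: le_trans (leey _) L_infty.
have g_neq0 := Ltilde_supp ls_ge0 L_fin.
rewrite (Ltilde_kl ls_ge0 g_neq0) lee_fin.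
apply: (@le_of_conv_le _ _ _ (\sum_k ls k * loss k gate_sigma)) => t t01.
apply: le_trans (v_le _ (G1pos_convr t01 g_G1 G1pos_gate_sigma)) _.
rewrite !mulr_sumr -big_split; apply: ler_sum => k _ /=.
have [->|lk] := eqVneq (ls k) 0; first by rewrite !mul0r !mulr0 addr0.
have lk_pos : 0 < ls k by rewrite lt_def lk ls_ge0.
rewrite mulrCA (mulrCA t) -mulrDr ler_wpM2l //.
apply: loss_conv; first by case/andP: t01 => t0 ->; rewrite ltW.
move=> x ph_gt0; split; last by apply: G1pos_gate_sigma.2; apply: mem_X0 ph_gt0.
rewrite lt_def (g_neq0 k) //=; apply: pi_g_ge0 (mem_X0 ph_gt0).
by case: g_G1.
Qed.

Definition max_loss g := \big[Num.max/loss (Ordinal p_gt0) g]_k loss k g.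

Lemma max_loss_ge g k : loss k g <= max_loss g.
Proof. exact: le_bigmax. Qed.

Lemma max_loss_attained g : exists k, max_loss g = loss k g.
Proof.
apply: (big_ind (fun y => exists k, y = loss k g)) => [|a b [i ->] [j ->]|k _].
- by exists (Ordinal p_gt0).
- by rewrite /Num.max; case: ifP => _; [exists j | exists i].
- by exists k.
Qed.

Definition negent k := \sum_(y | 0 < ph k y) ph k y * ln (ph k y).

Lemma loss_lower_bound g x k d : G1pos g -> 0 < ph k x -> pi_g pih g x < d ->
  negent k - ph k x * ln d <= loss k g.
Proof.
move=> [g_G1 g_pos] ph_gt0 pi_lt_d.
have pi_pos y : 0 < ph k y -> 0 < pi_g pih g y by move/mem_X0; apply: g_pos.
have -> : loss k g = negent k + \sum_(y | 0 < ph k y) ph k y * - ln (pi_g pih g y).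
  rewrite /loss /kl /negent -big_split; apply: eq_bigr => y ph_y /=.
  by rewrite ln_div ?posrE ?pi_pos //; ring.
rewrite lerD2l (bigD1 x) //= -mulrN.
have : 0 <= \sum_(y | (0 < ph k y) && (y != x)) ph k y * - ln (pi_g pih g y).
  apply: sumr_ge0 => y /andP[ph_y _]; apply: mulr_ge0; first exact: ltW.
  by rewrite oppr_ge0 ln_le0 // pi_g_le1 // (mem_X0 ph_y).
have : ph k x * - ln d <= ph k x * - ln (pi_g pih g x).
  apply: ler_wpM2l; first exact: ltW.
  rewrite lerN2 ler_ln ?posrE ?pi_pos ?ltW //.
  exact: lt_trans (pi_pos x ph_gt0) pi_lt_d.
lra.
Qed.

Lemma small_gate_threshold : exists2 d, 0 < d &
  (forall x, x \in X0 ph -> d <= pi_g pih gate_sigma x) /\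
  forall g, G1pos g -> forall x, x \in X0 ph -> pi_g pih g x < d ->
    exists k, max_loss gate_sigma <= loss k g.
Proof.
have [m m_gt0 m_le] := @pos_lower_bound _ _ (fun kx : 'I_p * T => 0 < ph kx.1 kx.2)
  (fun kx => ph kx.1 kx.2) (fun _ ph_gt0 => ph_gt0).
have [d0 d0_gt0 d0_le] := @pos_lower_bound _ _ (fun x => x \in X0 ph)
  (pi_g pih gate_sigma) G1pos_gate_sigma.2.
set B := `|max_loss gate_sigma| + \sum_k `|negent k|.
have B_ge0 : 0 <= B by rewrite addr_ge0 ?sumr_ge0.
(* [m] is the least positive mass [ph k x]; by [loss_lower_bound],
   [pi_g x < exp (- B / m)] forces [loss k g >= negent k + B >= max_loss gate_sigma] *)
set d := Num.min d0 (expR (- (B / m))).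
have d_gt0 : 0 < d by rewrite lt_min d0_gt0 expR_gt0.
exists d => //; split=> [x /d0_le | g g_pos x x_X0 pi_lt_d].
  by apply: le_trans; rewrite ge_min lexx.
move: (x_X0); rewrite inE => /existsP[k ph_gt0]; exists k.
apply: le_trans (loss_lower_bound g_pos ph_gt0 pi_lt_d).
have B_le : B <= ph k x * - ln d.
  have -> : B = m * (B / m) by rewrite mulrCA divff ?mulr1 // lt0r_neq0.
  apply: ler_pM; [exact: ltW | by rewrite divr_ge0 // ltW | exact: (m_le (k, x)) |].
  by rewrite lerNr -[X in _ <= X]expRK ler_ln ?posrE ?expR_gt0 // ge_min lexx orbT.
have : `|negent k| <= \sum_k `|negent k| by rewrite (bigD1 k) //= lerDl sumr_ge0.
have := ler_norm (max_loss gate_sigma); have := ler_norm (- negent k).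
rewrite normrN /B in B_le *; lra.
Qed.

Local Notation W := (prod_topology (fun _ : T * 'I_p => R)).

Definition gate_of (G : W) : T -> 'I_p -> R := fun x k => G (x, k).

Definition trunc_gates (d : R) : set W :=
  [set G | forall x, x \in X0 ph -> \sum_k G (x, k) = 1] `&`
  [set G | Z_g ph pih (gate_of G) = 1] `&`
  [set G | forall x, x \in X0 ph -> d <= pi_g pih (gate_of G) x].

Lemma continuous_pi_g x : continuous (fun G : W => pi_g pih (gate_of G) x).
Proof.
rewrite /pi_g; apply: (continuous_big add_continuous) => k _ G.
by apply: continuousM; [exact: proj_continuous | exact: cst_continuous].
Qed.

Lemma closed_trunc_gates d : closed (trunc_gates d).
Proof.
apply: closedI; first apply: closedI.
- apply: (closed_forall_preimage (D := fun=> [set 1]) (f := fun x (G : W) => \sum_k G (x, k))).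
    by move=> x _; apply: (continuous_big add_continuous) => k _; apply: proj_continuous.
  by move=> x _; apply: (@closed_eq R 1).
- have Z_cont : continuous (fun G : W => Z_g ph pih (gate_of G)).
    by rewrite /Z_g; apply: (continuous_big add_continuous) => x _; apply: continuous_pi_g.
  exact: (continuous_closedP _).1 Z_cont _ (@closed_eq R 1).
- apply: (closed_forall_preimage (D := fun=> [set y | d <= y])); last by move=> *; apply: closed_ge.
  by move=> x _; apply: continuous_pi_g.
Qed.

Lemma G1pos_trunc_gates d G : 0 < d -> (cube `&` trunc_gates d) G -> G1pos (gate_of G).
Proof.
move=> d_gt0 [G_cube [[G_sum1 G_Z] G_ge_d]]; split; first split => //.
  by move=> x x_X0; split=> [k|]; [have := G_cube (x, k); rewrite in_itv | exact: G_sum1].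
by move=> x x_X0; apply: lt_le_trans d_gt0 (G_ge_d x x_X0).
Qed.

Lemma trunc_gates_of g d : G1 ph pih g -> (forall x, x \in X0 ph -> d <= pi_g pih g x) ->
  exists2 G, (cube `&` trunc_gates d) G & pi_g pih (gate_of G) = pi_g pih g.
Proof.
move=> [g_gate g_Z] g_ge_d.
(* outside [X0] the gate is irrelevant; set it to 0 there to land in the cube *)
pose G : W := fun u => if u.1 \in X0 ph then g u.1 u.2 else 0.
have piG : pi_g pih (gate_of G) = pi_g pih g.
  apply: funext => x; rewrite /pi_g /gate_of /G /=.
  have [//|x_X0] := boolP (x \in X0 ph).
  by rewrite !big1 // => k _; rewrite pih_out ?mulr0.
exists G => //; split; [|split; [split|]].
- move=> [x k]; rewrite /G in_itv /=; case: ifPn => [x_X0|_]; last by rewrite lexx ler01.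
  by have [g01 _] := g_gate x x_X0.
- by move=> x x_X0; rewrite /G /= x_X0; have [_ ->] := g_gate x x_X0.
- by rewrite /= /Z_g piG.
- by move=> x x_X0; rewrite piG; apply: g_ge_d.
Qed.

Lemma continuous_loss k (G : W) :
  (forall x, 0 < ph k x -> 0 < pi_g pih (gate_of G) x) ->
  {for G, continuous (fun H : W => loss k (gate_of H))}.
Proof.
move=> G_pos; apply: continuous_big_at => [||x ph_gt0]; first exact: add_continuous.
  exact: cst_continuous.
have pi_gt0 := G_pos x ph_gt0.
apply: continuousM; first exact: cst_continuous.
apply: continuous_comp (continuous_ln _); last by rewrite divr_gt0.
apply: continuousM; first exact: cst_continuous.
by apply: continuousV; [rewrite lt0r_neq0 | exact: continuous_pi_g].
Qed.

Lemma minimax_gate : exists2 gs, G1pos gs & exists v,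
  (forall k, loss k gs <= v) /\ (forall g, G1pos g -> exists k, v <= loss k g).
Proof.
have [d d_gt0 [d_le_sigma d_escape]] := small_gate_threshold.
pose G_sigma : W := fun u => sigma eps u.2.
have G_sigma_K : (cube `&` trunc_gates d) G_sigma.
  split=> [u|]; first by rewrite in_itv /= ltW ?sigma_gt0 ?sigma_le1.
  split; [split => [x _|] | exact: d_le_sigma]; first exact: sum_sigma.
  by have [[_ Z_sig] _] := G1pos_gate_sigma.
have max_loss_cont G : (cube `&` trunc_gates d) G ->
    {for G, continuous (fun H : W => max_loss (gate_of H))}.
  move=> /(G1pos_trunc_gates d_gt0) [_ G_pos].
  have loss_cont k := continuous_loss (fun x ph_gt0 => G_pos x (mem_X0 ph_gt0)) (k := k).
  exact: continuous_big_at max_continuous (loss_cont _) (fun k _ => loss_cont k).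
have [G0 G0_K G0_min] := cube_argmin (ex_intro _ G_sigma G_sigma_K)
  (closed_trunc_gates (d := d)) max_loss_cont.
exists (gate_of G0); first exact: G1pos_trunc_gates G0_K.
exists (max_loss (gate_of G0)); split => [k|g g_pos]; first exact: max_loss_ge.
have [g_ge_d|] := pselect (forall x, x \in X0 ph -> d <= pi_g pih g x).
  have [G G_K piG] := trunc_gates_of g_pos.1 g_ge_d.
  have [k g_max] := max_loss_attained g; exists k; rewrite -g_max.
  by have := G0_min G G_K; rewrite /max_loss /loss piG.
move=> /existsNP[x /not_implyP[x_X0 /negP]]; rewrite -ltNge => pi_lt_d.
have [k sigma_le] := d_escape g g_pos x x_X0 pi_lt_d; exists k.
exact: le_trans (G0_min G_sigma G_sigma_K) sigma_le.
Qed.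

Lemma saddle_exists : exists ls gs, saddle ph pih ls gs.
Proof.
have [gs gs_pos [v [gs_le gs_ge]]] := minimax_gate.
have [ls ls_simplex ls_ge] := convexlike_minimax p_gt0 convexlike_loss gs_ge.
have mean_le l : simplex l -> \sum_k l k * loss k gs <= v.
  move=> [l_ge0 l_sum1]; rewrite -[leRHS]mul1r -l_sum1 mulr_suml.
  by apply: ler_sum => k _; rewrite ler_wpM2l.
exists ls, gs; split => //; first exact: gs_pos.1.
  move=> l l_simplex; rewrite !Ltilde_G1pos // lee_fin.
  exact: le_trans (mean_le l l_simplex) (ls_ge gs gs_pos).
move=> g g_G1; rewrite Ltilde_G1pos //.
apply: le_trans (Ltilde_ge_of_G1pos ls_simplex ls_ge g_G1).
by rewrite lee_fin mean_le.
Qed.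

End Game.

Theorem mainTheorem5 (R : realType) (T : finType) (p : nat)
  (ph pih : 'I_p -> T -> R) (eps : 'I_p -> R) :
  (0 < p)%N ->
  (forall k, is_distr (ph k)) ->
  (forall k, distr_on (X0 ph) (pih k)) ->
  (forall k, (KL (ph k) (pih k) <= (eps k)%:E)%E) ->
  (exists lstar gstar, saddle ph pih lstar gstar) /\
  (forall lstar gstar, saddle ph pih lstar gstar ->
     forall l, simplex l ->
       (KL (mix l ph) (pi_g pih gstar)
          <= (ln (\sum_k expR (eps k)))%:E - Hcond lstar eps ph pih - JSD l ph)%E).
Proof.
move=> p_gt0 ph_distr pih_distr KL_le_eps; split.
  exact: saddle_exists.
exact: saddle_bound.
Qed.
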